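(* Let $m,a,b,t\in\mathbb{N}$ with $m\geq 3$, $a\geq 1$, $t\in\{2,\ldots,m-1\}$ and $(t-1)(am+1)<bm+t<t(am+1)$, and let $S=\langle m,\ am+1,\ bm+t\rangle$ (a MANS-semigroup with embedding dimension $3$). Then the type $\mathrm{t}(S)$ equals $1$ if and only if $t$ divides $m$.
   Context: $\mathbb{N}=\{0,1,2,\ldots\}$. $\langle A\rangle$ is the submonoid of $(\mathbb{N},+)$ generated by $A$; a numerical semigroup is a submonoid of $\mathbb{N}$ with finite complement. A pseudo-Frobenius number of $S$ is an $x\in\mathbb{Z}\setminus S$ with $x+s\in S$ for all $s\in S\setminus\{0\}$; $\mathrm{PF}(S)$ is the set of them and $\mathrm{t}(S)=|\mathrm{PF}(S)|$ is the type of $S$. A MANS-semigroup is a numerical semigroup with $w(1)<\cdots<w(\mathrm{m}(S)-1)$, where $\mathrm{m}(S)$ is the least element of $S\setminus\{0\}$ and $w(i)$ the least element of $S$ congruent to $i$ modulo $\mathrm{m}(S)$. *)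

From mathcomp Require Import all_boot all_order all_algebra.
Set Implicit Arguments. Unset Strict Implicit. Unset Printing Implicit Defensive.
Import GRing.Theory Num.Theory.

Inductive gen_monoid (A : nat -> Prop) : nat -> Prop :=
  | gen_zero : gen_monoid A 0
  | gen_elt a : A a -> gen_monoid A a
  | gen_add x y : gen_monoid A x -> gen_monoid A y -> gen_monoid A (x + y).

Definition memZ (S : nat -> Prop) (z : int) : Prop :=
  exists n : nat, z = Posz n /\ S n.

Definition pseudo_frobenius (S : nat -> Prop) (x : int) : Prop :=
  ~ memZ S x /\ (forall s : nat, S s -> s <> 0%N -> memZ S (x + Posz s)%R).

(* is_type S k : the set PF(S) is finite with exactly k elements, i.e. t(S) = k *)
Definition is_type (S : nat -> Prop) (k : nat) : Prop :=
  exists l : seq int, uniq l /\ (forall x, x \in l <-> pseudo_frobenius S x)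
                      /\ size l = k.

From mathcomp Require Import all_boot all_order all_algebra zify.

(* An element [y (am+1) + z (bm+t)] lies in the
   residue class [y + zt] modulo [m], and when [(t-1)a <= b <= ta] the cheapest
   way to reach the residue [i < m] is with [i %/ t] copies of [bm+t] and
   [i %% t] copies of [am+1].  Hence the Apery set of [S] with respect to [m] is
   [w(i) = kunz i * m + i] with [kunz i = (i %/ t) b + (i %% t) a], and
   [Q m + i] lies in [S] iff [kunz i <= Q].  The pseudo-Frobenius numbers are the
   [w(i) - m] with [w(i)] maximal in the Apery set; adding [am+1] or [bm+t]
   shows these are the [i] in [[m-t, m-1]] with [i = m-1] or [t | i+1].  When
   [t] divides [m] the only one is [m-1]; otherwise [t * (m %/ t) - 1] is a
   second one. *)

Lemma gen_monoid_mull (A : nat -> Prop) k g :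
  gen_monoid A g -> gen_monoid A (k * g).
Proof.
move=> Ag; elim: k => [|k IHk]; first exact: gen_zero.
by rewrite mulSn; apply: gen_add.
Qed.

Lemma gen_monoid3P g1 g2 g3 n :
  gen_monoid (fun x => x = g1 \/ x = g2 \/ x = g3) n <->
  exists x y z, n = x * g1 + y * g2 + z * g3.
Proof.
split.
- elim=> [|g [->|[->|->]]|x y _ [x1 [y1 [z1 ->]]] _ [x2 [y2 [z2 ->]]]].
  + by exists 0, 0, 0.
  + by exists 1, 0, 0; lia.
  + by exists 0, 1, 0; lia.
  + by exists 0, 0, 1; lia.
  + by exists (x1 + x2), (y1 + y2), (z1 + z2); lia.
- move=> [x [y [z ->]]].
  by apply: gen_add; [apply: gen_add|];
    apply: gen_monoid_mull; apply: gen_elt; tauto.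
Qed.

Lemma gen_monoid_addl (A : nat -> Prop) n :
  (forall g, A g -> g <> 0 -> gen_monoid A (n + g)) ->
  forall s, gen_monoid A s -> s <> 0 -> gen_monoid A (n + s).
Proof.
move=> nA s; elim=> [/(_ erefl) [] | g /nA // | x y _ IHx Sy IHy xy_neq0].
have [x0 | /eqP x_neq0] := eqVneq x 0.
- by move: xy_neq0; rewrite x0 add0n => /IHy.
- by rewrite addnA; apply: gen_add; [apply: IHx|].
Qed.

Lemma memZ_Posz (S : nat -> Prop) n : memZ S (Posz n) <-> S n.
Proof. by split=> [[k [[->] Sk]] | Sn] //; exists n. Qed.

Lemma pseudo_frobenius_genP (A : nat -> Prop) n :
  pseudo_frobenius (gen_monoid A) (Posz n) <->
  ~ gen_monoid A n /\ forall g, A g -> g <> 0 -> gen_monoid A (n + g).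
Proof.
rewrite /pseudo_frobenius memZ_Posz.
split=> [[nSn nS] | [nSn nA]]; split=> //.
- move=> g Ag g_neq0; rewrite -memZ_Posz PoszD.
  by apply: nS => //; apply: gen_elt.
- by move=> s Ss s_neq0; rewrite -PoszD memZ_Posz; apply: gen_monoid_addl.
Qed.

Lemma is_type1P (S : nat -> Prop) :
  is_type S 1 <-> exists x, forall y, pseudo_frobenius S y <-> y = x.
Proof.
split=> [[[|x [|? ?]] [_ [PF //]]] _ | [x PF]].
- by exists x => y; rewrite -PF inE; split=> /eqP.
- by exists [:: x]; split=> //; split=> // y; rewrite PF inE; split=> /eqP.
Qed.

Section KunzCoordinates.

Variables m a b t : nat.
Hypotheses (t_gt0 : 0 < t) (b_ge : (t - 1) * a <= b) (b_le : b <= t * a).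

Let S := gen_monoid (fun x => x = m \/ x = a * m + 1 \/ x = b * m + t).

Definition kunz i := i %/ t * b + i %% t * a.

Lemma kunzE q r : r < t -> kunz (q * t + r) = q * b + r * a.
Proof.
move=> lt_rt.
by rewrite /kunz divnMDl // modnMDl divn_small // modn_small // addn0.
Qed.

Lemma kunz_small r : r < t -> kunz r = r * a.
Proof. by move=> lt_rt; rewrite -[r]add0n -(mul0n t) kunzE. Qed.

Lemma kunz_le_cost n y z : n <= y + z * t -> kunz n <= y * a + z * b.
Proof.
move=> le_n; rewrite /kunz.
have n_eq := divn_eq n t; have lt_rt := ltn_pmod n t_gt0.
move: (n %/ t) (n %% t) n_eq lt_rt => q r n_eq lt_rt.
have [le_zq | lt_qz] := leqP z q.
- have [d q_eq] : exists d, q = z + d by exists (q - z); lia.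
  rewrite q_eq mulnDl in n_eq *.
  have : d * b <= d * (t * a) by rewrite leq_mul2l b_le orbT.
  have : (d * t + r) * a <= y * a by rewrite leq_mul2r; apply/orP; right; lia.
  nia.
- have : r * a <= (t - 1) * a by rewrite leq_mul2r; lia.
  have : q.+1 * b <= z * b by rewrite leq_mul2r lt_qz orbT.
  lia.
Qed.

Lemma mem_kunz Q i : i < m -> S (Q * m + i) <-> kunz i <= Q.
Proof.
move=> lt_im; rewrite /S gen_monoid3P; split=> [[x [y [z E]]] | le_kQ].
- set c := x + y * a + z * b.
  have {}E : Q * m + i = c * m + (y + z * t) by rewrite E /c; lia.
  have le_cQ : c <= Q.
    rewrite leqNgt; apply/negP => lt_Qc.
    have : Q.+1 * m <= c * m by rewrite leq_mul2r lt_Qc orbT.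
    lia.
  have le_cmQm : c * m <= Q * m by rewrite leq_mul2r le_cQ orbT.
  have : kunz i <= y * a + z * b by apply: kunz_le_cost; lia.
  lia.
- exists (Q - kunz i), (i %% t), (i %/ t).
  have := divn_eq i t; have : Q * m = (Q - kunz i) * m + kunz i * m.
    by rewrite -mulnDl subnK.
  rewrite /kunz; nia.
Qed.

Section PseudoFrobenius.

Hypotheses (t_gt1 : 1 < t) (t_lt_m : t < m) (a_gt0 : 0 < a) (b_lt : b < t * a).

Lemma kunz_gt0 i : 0 < i -> 0 < kunz i.
Proof.
move=> i_gt0; have b_gt0 : 0 < b by nia.
have := divn_eq i t; rewrite /kunz; nia.
Qed.

Lemma kunzDt i : kunz (i + t) = kunz i + b.
Proof.
have -> : i + t = (i %/ t).+1 * t + i %% t.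
  by rewrite mulSn {1}(divn_eq i t); lia.
by rewrite kunzE ?ltn_pmod // /kunz mulSn; lia.
Qed.

Lemma kunzS i : ~~ (t %| i.+1) -> kunz i.+1 = kunz i + a.
Proof.
by move=> /negbTE ndvd; rewrite /kunz modnS divnS // ndvd; lia.
Qed.

Lemma kunzS_dvd i : t %| i.+1 -> kunz i.+1 + (t - 1) * a = kunz i + b.
Proof.
move=> /dvdnP [p i_eq]; have p_gt0 : 0 < p by case: p i_eq.
have i_eq' : i = p.-1 * t + (t - 1).
  by move: i_eq; rewrite -{1}(prednK p_gt0) mulSn; lia.
rewrite i_eq -[p * t]addn0 kunzE // i_eq' kunzE; last by lia.
by rewrite -{1}(prednK p_gt0) mulSn; lia.
Qed.

Definition pf_residue i := [&& m - t <= i, i < m & (i.+1 == m) || (t %| i.+1)].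

Definition pf_number i : int := Posz ((kunz i).-1 * m + i).

Lemma pseudo_frobenius_pf_number i :
  pf_residue i -> pseudo_frobenius S (pf_number i).
Proof.
case/and3P=> le_i lt_im last_or_dvd.
have kunz_gt0i : 0 < kunz i by apply: kunz_gt0; lia.
set c := kunz i in kunz_gt0i *.
apply/pseudo_frobenius_genP; split=> [/mem_kunz | g [->|[->|->]] _].
- by move=> /(_ lt_im); rewrite -/c; lia.
- have -> : c.-1 * m + i + m = c * m + i.
    by rewrite -{2}(prednK kunz_gt0i) mulSn; lia.
  exact/mem_kunz.
- have [last_i | not_last] := eqVneq i.+1 m.
    have -> : c.-1 * m + i + (a * m + 1) = (c.-1 + a).+1 * m + 0.
      by rewrite -last_i; lia.
    by apply/mem_kunz; rewrite ?kunz_small; lia.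
  have dvd : t %| i.+1 by move: last_or_dvd; rewrite (negbTE not_last).
  have -> : c.-1 * m + i + (a * m + 1) = (c.-1 + a) * m + i.+1 by lia.
  by apply/mem_kunz; [lia | have := kunzS_dvd _ dvd; rewrite -/c; nia].
- have -> : c.-1 * m + i + (b * m + t) = (c + b) * m + (i + t - m).
    by rewrite -{2}(prednK kunz_gt0i); lia.
  apply/mem_kunz; first lia.
  have : (i + t - m) * a <= (t - 1) * a by rewrite leq_mul2r; lia.
  by rewrite kunz_small; lia.
Qed.

Lemma pseudo_frobenius_Negz k : ~ pseudo_frobenius S (Negz k).
Proof.
move=> [_ PF].
have [n [n_eq Sn]] : memZ S (Negz k + Posz m).
  by apply: PF; [apply: gen_elt; left | lia].
have k_eq : k.+1 = m.
  have lt_nm : n < m by rewrite NegzE in n_eq; lia.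
  have /mem_kunz : S (0 * m + n) by [].
  move=> /(_ lt_nm); rewrite leqn0 => /eqP kunz_n0.
  have n0 : n = 0 by apply/eqP; rewrite eqn0Ngt; apply/negP => /kunz_gt0; lia.
  by move: n_eq; rewrite n0 NegzE; lia.
have [n' [n'_eq Sn']] : memZ S (Negz k + Posz (a * m + 1)).
  by apply: PF; [apply: gen_elt; right; left | lia].
have {}n'_eq : n' = (a - 1) * m + 1 by move: n'_eq; rewrite NegzE; nia.
move: Sn'; rewrite n'_eq => /mem_kunz; rewrite kunz_small //; lia.
Qed.

Lemma pseudo_frobeniusP x :
  pseudo_frobenius S x -> exists2 i, pf_residue i & x = pf_number i.
Proof.
case: x => [n | k] PF; last by case: (pseudo_frobenius_Negz _ PF).
move/pseudo_frobenius_genP: PF => [nSn nS].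
have lt_im : n %% m < m by rewrite ltn_pmod //; lia.
move: (n %/ m) (n %% m) (divn_eq n m) lt_im nSn nS => Q i -> lt_im nSn nS.
have lt_Qk : Q < kunz i by rewrite ltnNge; apply/negP => /(mem_kunz _ _ lt_im).
have le_kQ : kunz i <= Q.+1.
  apply/(mem_kunz _ _ lt_im); rewrite mulSnr addnAC; apply: nS; lia.
exists i; last by congr Posz; congr (_ * m + i); lia.
apply/and3P; split=> //.
  rewrite leqNgt; apply/negP => lt_it.
  have /mem_kunz : S ((Q + b) * m + (i + t)).
    by rewrite mulnDl addnACA; apply: nS; lia.
  by move=> /(_ ltac:(lia)); rewrite kunzDt; lia.
have [//|not_last] := eqVneq i.+1 m; apply/negPn/negP => ndvd.
have /mem_kunz : S ((Q + a) * m + i.+1).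
  by rewrite mulnDl -addn1 addnACA; apply: nS; lia.
by move=> /(_ ltac:(lia)); rewrite kunzS //; lia.
Qed.

Lemma pf_number_inj i j : i < m -> j < m -> pf_number i = pf_number j -> i = j.
Proof.
move=> lt_im lt_jm [/(congr1 (modn^~ m))] /=.
by rewrite !modnMDl !modn_small.
Qed.

Lemma pf_residue_last : pf_residue m.-1.
Proof. by apply/and3P; split; rewrite ?prednK ?eqxx //; lia. Qed.

Lemma pf_residue_unique : (forall i, pf_residue i -> i = m.-1) <-> t %| m.
Proof.
split=> [uniq_last | dvd_tm i /and3P [le_i lt_im]].
- apply/negPn/negP => ndvd.
  have m_eq := divn_eq m t; have lt_rt := ltn_pmod m (ltnW t_gt1).
  have r_gt0 : 0 < m %% t by rewrite lt0n.
  have q_gt0 : 0 < m %/ t by rewrite divn_gt0; lia.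
  have pf_prev : pf_residue (m %/ t * t).-1.
    by apply/and3P; split; rewrite ?prednK ?dvdn_mull ?orbT //; nia.
  by move: (uniq_last _ pf_prev); nia.
- have [/eqP|not_last /= dvd] := eqVneq i.+1 m; first by lia.
  have : t %| m - i.+1 by rewrite dvdn_sub.
  by move/dvdn_leq; lia.
Qed.

Lemma pseudo_frobenius_unique :
  (exists x, forall y, pseudo_frobenius S y <-> y = x) <-> t %| m.
Proof.
have lt_last : m.-1 < m by lia.
rewrite -pf_residue_unique; split=> [[x PF] i pf_i | uniq_last].
- have /PF PFi := pseudo_frobenius_pf_number _ pf_i.
  have /PF := pseudo_frobenius_pf_number _ pf_residue_last.
  move: pf_i => /and3P [_ lt_im _].
  move=> last_eq; apply/esym/(pf_number_inj _ _ lt_last lt_im).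
  by rewrite last_eq PFi.
- exists (pf_number m.-1) => y.
  split=> [/pseudo_frobeniusP [i /uniq_last -> //] | ->].
  exact: pseudo_frobenius_pf_number _ pf_residue_last.
Qed.

End PseudoFrobenius.

End KunzCoordinates.

Theorem proposition3p21 (m a b t : nat) :
  (3 <= m)%N -> (1 <= a)%N -> (2 <= t)%N -> (t <= m - 1)%N ->
  ((t - 1) * (a * m + 1) < b * m + t)%N ->
  (b * m + t < t * (a * m + 1))%N ->
  is_type (gen_monoid (fun x => x = m \/ x = a * m + 1 \/ x = b * m + t)) 1
  <-> (t %| m)%N.
Proof.
move=> m_ge3 a_gt0 t_gt1 t_le lo hi.
have b_ge : (t - 1) * a <= b.
  by rewrite -(leq_pmul2r (_ : 0 < m)); lia.
have b_lt : b < t * a.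
  by rewrite -(ltn_pmul2r (_ : 0 < m)); lia.
rewrite is_type1P; apply: pseudo_frobenius_unique => //; lia.
Qed.
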